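(* Let $F:\mathbb{R}\to(0,1)$ be a continuous, strictly increasing cumulative distribution function with $\lim_{u\to-\infty}F(u)=0$ and $\lim_{u\to+\infty}F(u)=1$, so that $F^{-1}:(0,1)\to\mathbb{R}$ exists and is continuous and strictly increasing. Define the mirror map $\Phi:(0,1)^m\to\mathbb{R}$ by $\Phi(\boldsymbol\theta)=\sum_{i=1}^m\int_{1/2}^{\theta_i}F^{-1}(u)\,du$ and its Bregman divergence $D_\Phi(\boldsymbol\theta,\boldsymbol\theta')=\Phi(\boldsymbol\theta)-\Phi(\boldsymbol\theta')-\langle\nabla\Phi(\boldsymbol\theta'),\boldsymbol\theta-\boldsymbol\theta'\rangle$. Let $\boldsymbol\eta^t\in\mathbb{R}^m$, $\boldsymbol\theta^t=F(\boldsymbol\eta^t)$ (coordinate-wise), $\mathbf{g}^t\in\mathbb{R}^m$ arbitrary and $\varepsilon>0$. Then the (stochastic) mirror descent step $$\boldsymbol\theta^{t+1}=\arg\min_{\boldsymbol\theta\in(0,1)^m}\Big\{\langle\mathbf{g}^t,\boldsymbol\theta-\boldsymbol\theta^t\rangle+\tfrac1\varepsilon D_\Phi(\boldsymbol\theta,\boldsymbol\theta^t)\Big\}$$ has a unique solution, and it equals $F(\boldsymbol\eta^{t+1})$ where $\boldsymbol\eta^{t+1}=\boldsymbol\eta^t-\varepsilon\mathbf{g}^t$. In particular, plain SGD on the latent weights $\boldsymbol\eta$, $\boldsymbol\eta^{t+1}=\boldsymbol\eta^t-\varepsilon\hat{\mathbf g}^t$, where $\hat{\mathbf g}^t$ is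 the identity straight-through-weights estimate (defined in the context) computed at $\boldsymbol\eta^t$, implements stochastic mirror descent in the weight probabilities $\boldsymbol\theta=F(\boldsymbol\eta)$ with divergence $D_\Phi$ and stochastic gradient $\hat{\mathbf g}^t$.
   Context: Binary weights $\mathbf{w}\in\{-1,1\}^m$ have independent coordinates with $P(w_i=1)=\theta_i$; they are modelled as $w_i=\mathrm{sign}(\eta_i-z_i)$ with independent noises $z_i$ of cdf $F$, so $\theta_i=F(\eta_i)$; the $\eta_i\in\mathbb{R}$ are called latent weights. For a differentiable loss $\mathcal{L}:\mathbb{R}^m\to\mathbb{R}$ one wishes to minimize $\mathbb{E}_{\mathbf{w}}[\mathcal{L}(\mathbf{w})]$ over $\boldsymbol\theta\in[0,1]^m$. The identity straight-through-weights estimator: on the forward pass sample $\mathbf{w}$ with $P(w_i=1)=F(\eta_i)$; on the backward pass set the gradient with respect to $\boldsymbol\eta$ to $\hat{\mathbf g}=2\nabla_{\mathbf w}\mathcal{L}(\mathbf{w})$ (i.e., the factor $F'(\eta_i)$ of the chain rule is omitted); $\hat{\mathbf g}$ serves as a (straight-through) estimate of $\nabla_{\boldsymbol\theta}\mathbb{E}_{\mathbf w}[\mathcal{L}(\mathbf w)]$. *)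

From Stdlib Require Import Reals.
From Coquelicot Require Import Coquelicot.
Open Scope R_scope.

(* Vectors in R^m are represented as functions nat -> R; only the
   coordinates i < m are meaningful. *)

Fixpoint sumR (m : nat) (f : nat -> R) : R :=
  match m with
  | O => 0
  | S k => sumR k f + f k
  end.

Definition inner (m : nat) (u v : nat -> R) : R := sumR m (fun i => u i * v i).

Definition in_open_box (m : nat) (th : nat -> R) : Prop :=
  forall i, (i < m)%nat -> 0 < th i < 1.

Definition upd (th : nat -> R) (i : nat) (x : R) : nat -> R :=
  fun j => if Nat.eqb j i then x else th j.

Definition Phi (Finv : R -> R) (m : nat) (th : nat -> R) : R :=
  sumR m (fun i => RInt Finv (1/2) (th i)).

Definition gradPhi (Finv : R -> R) (m : nat) (th : nat -> R) (i : nat) : R :=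
  Derive (fun x => Phi Finv m (upd th i x)) (th i).

Definition D_Phi (Finv : R -> R) (m : nat) (th th' : nat -> R) : R :=
  Phi Finv m th - Phi Finv m th'
  - inner m (gradPhi Finv m th') (fun i => th i - th' i).

Definition md_objective (Finv : R -> R) (m : nat) (g tht : nat -> R) (eps : R)
  (th : nat -> R) : R :=
  inner m g (fun i => th i - tht i) + / eps * D_Phi Finv m th tht.

From Stdlib Require Import Reals Ranalysis5 Lra Lia.
From Coquelicot Require Import Coquelicot.
Open Scope R_scope.

(* Phi is separable, Phi(th) = sum_i phi(th_i) with phi' = Finv, so D_Phi is the
   sum of the one-dimensional divergences d(x, y) = phi x - phi y - Finv y (x - y).
   Since Finv (F (eta_i - eps g_i)) = Finv (tht_i) - eps g_i, the three-point
   identity for d shows that the objective at th exceeds its value at thnew by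
   exactly (1/eps) sum_i d(th_i, thnew_i).  As Finv is continuous and strictly
   increasing, phi is strictly convex, i.e. d(x, y) > 0 for x <> y, which gives
   both minimality and uniqueness. *)

Section InverseCDF.
Variables F Finv : R -> R.
Hypothesis F_continuous : forall x, continuous F x.
Hypothesis F_incr : forall x y, x < y -> F x < F y.
Hypothesis F_range : forall x, 0 < F x < 1.
Hypothesis F_Finv : forall u, 0 < u < 1 -> F (Finv u) = u.

Lemma Finv_incr u v : 0 < u -> u < v -> v < 1 -> Finv u < Finv v.
Proof.
  intros Hu Huv Hv.
  destruct (Rlt_or_le (Finv u) (Finv v)) as [|Hle]; [assumption|].
  destruct Hle as [Hlt|Heq].
  - apply F_incr in Hlt. rewrite !F_Finv in Hlt by lra. lra.
  - apply (f_equal F) in Heq. rewrite !F_Finv in Heq by lra. lra.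
Qed.

Lemma Finv_continuous u : 0 < u < 1 -> continuous Finv u.
Proof.
  intros Hu. apply continuity_pt_filterlim.
  set (lb := Finv u - 1). set (ub := Finv u + 1).
  assert (Hlb : F lb < u) by (rewrite <- (F_Finv u Hu); apply F_incr; unfold lb; lra).
  assert (Hub : u < F ub) by (rewrite <- (F_Finv u Hu); apply F_incr; unfold ub; lra).
  assert (Hin : forall x, F lb <= x -> x <= F ub -> 0 < x < 1).
  { intros x H1 H2. pose proof (F_range lb). pose proof (F_range ub). lra. }
  apply (continuity_pt_recip_interv F Finv lb ub); [unfold lb, ub; lra | | | | | lra].
  - intros x y _ Hxy _. apply F_incr, Hxy.
  - intros x H1 H2. apply F_Finv, Hin; assumption.
  - intros x H1 H2. split; apply Rnot_lt_le; intros Hc; apply F_incr in Hc;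
      rewrite F_Finv in Hc by (apply Hin; assumption); lra.
  - intros a _. apply continuity_pt_filterlim, F_continuous.
Qed.
End InverseCDF.

Lemma sumR_ext m f g : (forall i, (i < m)%nat -> f i = g i) -> sumR m f = sumR m g.
Proof.
  induction m as [|m IH]; intros H; simpl; [reflexivity|].
  rewrite IH by (intros; apply H; lia). rewrite H by lia. reflexivity.
Qed.

Lemma sumR_plus m f g : sumR m (fun i => f i + g i) = sumR m f + sumR m g.
Proof. induction m as [|m IH]; simpl; [ring|]. rewrite IH. ring. Qed.

Lemma sumR_minus m f g : sumR m (fun i => f i - g i) = sumR m f - sumR m g.
Proof. induction m as [|m IH]; simpl; [ring|]. rewrite IH. ring. Qed.

Lemma sumR_scal m c f : sumR m (fun i => c * f i) = c * sumR m f.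
Proof. induction m as [|m IH]; simpl; [ring|]. rewrite IH. ring. Qed.

Lemma sumR_ge0 m f : (forall i, (i < m)%nat -> 0 <= f i) -> 0 <= sumR m f.
Proof.
  induction m as [|m IH]; intros H; simpl; [lra|].
  assert (0 <= sumR m f) by (apply IH; intros; apply H; lia).
  assert (0 <= f m) by (apply H; lia). lra.
Qed.

Lemma sumR_ge_term m f i : (forall j, (j < m)%nat -> 0 <= f j) -> (i < m)%nat ->
  f i <= sumR m f.
Proof.
  induction m as [|m IH]; intros H Hi; simpl; [lia|].
  assert (0 <= sumR m f) by (apply sumR_ge0; intros; apply H; lia).
  destruct (Nat.eq_dec i m) as [->|Hne]; [lra|].
  assert (f i <= sumR m f) by (apply IH; [intros; apply H|]; lia).
  assert (0 <= f m) by (apply H; lia). lra.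
Qed.

Lemma sumR_upd m (K : R -> R) th i x : (i < m)%nat ->
  sumR m (fun j => K (upd th i x j)) = sumR m (fun j => K (th j)) - K (th i) + K x.
Proof.
  induction m as [|m IH]; intros Hi; [lia|]. simpl.
  destruct (Nat.eq_dec i m) as [->|Hne].
  - rewrite (sumR_ext m (fun j => K (upd th m x j)) (fun j => K (th j))).
    + unfold upd. rewrite Nat.eqb_refl. ring.
    + intros j Hj. unfold upd. destruct (Nat.eqb_spec j m); [lia|reflexivity].
  - rewrite IH by lia. unfold upd at 1. destruct (Nat.eqb_spec m i); [lia|]. ring.
Qed.

Lemma ex_RInt_open_interval (f : R -> R) (a b u v : R) :
  (forall t, a < t < b -> continuous f t) -> a < u < b -> a < v < b -> ex_RInt f u v.
Proof.
  intros Hf Hu Hv. apply (@ex_RInt_continuous R_CompleteNormedModule).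
  intros t Ht. apply Hf. split.
  - apply Rlt_le_trans with (Rmin u v); [apply Rmin_glb_lt|]; lra.
  - apply Rle_lt_trans with (Rmax u v); [|apply Rmax_lub_lt]; lra.
Qed.

Lemma is_derive_RInt_open (f : R -> R) (a b c y : R) :
  (forall t, a < t < b -> continuous f t) -> a < c < b -> a < y < b ->
  is_derive (fun x => RInt f c x) y (f y).
Proof.
  intros Hf Hc Hy. apply (is_derive_RInt f _ c); [|apply Hf, Hy].
  assert (Hd : 0 < Rmin (y - a) (b - y)) by (apply Rmin_glb_lt; lra).
  exists (mkposreal _ Hd). intros z Hz. apply (@RInt_correct R_CompleteNormedModule).
  change (Rabs (z - y) < Rmin (y - a) (b - y)) in Hz.
  pose proof (Rmin_l (y - a) (b - y)). pose proof (Rmin_r (y - a) (b - y)).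
  apply Rabs_def2 in Hz. apply (ex_RInt_open_interval f a b c z Hf); lra.
Qed.

Lemma RInt_const_R (a b k : R) : RInt (fun _ => k) a b = k * (b - a).
Proof. rewrite RInt_const. unfold scal; simpl. unfold mult; simpl. ring. Qed.

Lemma RInt_gt_tangent (f : R -> R) (x y : R) : x <> y ->
  (forall t, Rmin x y <= t <= Rmax x y -> continuous f t) ->
  (forall u v, Rmin x y <= u -> u < v -> v <= Rmax x y -> f u < f v) ->
  f y * (x - y) < RInt f y x.
Proof.
  intros Hxy Hc Hf.
  assert (Hex : ex_RInt f x y) by exact (ex_RInt_continuous f x y Hc).
  assert (Hcst : forall t, continuous (fun _ : R => f y) t)
    by (intros; apply continuous_const).
  destruct (Rdichotomy x y Hxy) as [Hlt|Hgt].
  - rewrite Rmin_left, Rmax_right in Hc, Hf by lra.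
    assert (Hlt_int : RInt f x y < RInt (fun _ => f y) x y).
    { apply RInt_lt; auto. intros t Ht. apply Hf; lra. }
    rewrite <- (opp_RInt_swap f x y Hex), RInt_const_R in *.
    change (f y * (x - y) < - RInt f x y). lra.
  - rewrite Rmin_right, Rmax_left in Hc, Hf by lra.
    rewrite <- RInt_const_R. apply RInt_lt; auto. intros t Ht. apply Hf; lra.
Qed.

Definition bregman_1d (Finv : R -> R) (x y : R) : R :=
  RInt Finv (1/2) x - RInt Finv (1/2) y - Finv y * (x - y).

Lemma bregman_1d_three_point Finv x y a :
  bregman_1d Finv x a - bregman_1d Finv y a
  = bregman_1d Finv x y + (Finv y - Finv a) * (x - y).
Proof. unfold bregman_1d. ring. Qed.

(* [Finv y = Finv a - eps * c] says that y is the mirror-descent step from a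
   with gradient c. *)
Lemma mirror_step_excess Finv c a y eps x : eps <> 0 -> Finv y = Finv a - eps * c ->
  c * (x - a) + / eps * bregman_1d Finv x a
  = c * (y - a) + / eps * bregman_1d Finv y a + / eps * bregman_1d Finv x y.
Proof.
  intros Heps Hy.
  assert (E := bregman_1d_three_point Finv x y a). rewrite Hy in E.
  replace (bregman_1d Finv x a)
    with (bregman_1d Finv y a + bregman_1d Finv x y - eps * c * (x - y)) by lra.
  field. exact Heps.
Qed.

Section MirrorMap.

Variable Finv : R -> R.
Hypothesis HFinv_cont : forall u, 0 < u < 1 -> continuous Finv u.
Hypothesis HFinv_incr : forall u v, 0 < u -> u < v -> v < 1 -> Finv u < Finv v.

Lemma bregman_1d_pos x y : 0 < x < 1 -> 0 < y < 1 -> x <> y -> 0 < bregman_1d Finv x y.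
Proof.
  intros Hx Hy Hxy.
  assert (Hmin : 0 < Rmin x y) by (apply Rmin_glb_lt; lra).
  assert (Hmax : Rmax x y < 1) by (apply Rmax_lub_lt; lra).
  assert (Hchasles : RInt Finv (1/2) x - RInt Finv (1/2) y = RInt Finv y x).
  { rewrite <- (RInt_Chasles Finv (1/2) y x)
      by (apply (ex_RInt_open_interval Finv 0 1); auto; lra).
    change (RInt Finv (1/2) y + RInt Finv y x - RInt Finv (1/2) y = RInt Finv y x). ring. }
  assert (Htangent : Finv y * (x - y) < RInt Finv y x).
  { apply RInt_gt_tangent; [exact Hxy | |].
    - intros t Ht. apply HFinv_cont. lra.
    - intros u v Hu Huv Hv. apply HFinv_incr; lra. }
  unfold bregman_1d. lra.
Qed.

Lemma bregman_1d_ge0 x y : 0 < x < 1 -> 0 < y < 1 -> 0 <= bregman_1d Finv x y.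
Proof.
  intros Hx Hy. destruct (Req_dec x y) as [->|Hxy].
  - unfold bregman_1d. lra.
  - left. apply bregman_1d_pos; assumption.
Qed.

Lemma gradPhi_eq_Finv m th i : (i < m)%nat -> 0 < th i < 1 ->
  gradPhi Finv m th i = Finv (th i).
Proof.
  intros Hi Hth. unfold gradPhi, Phi. apply is_derive_unique.
  apply (is_derive_ext (fun x => plus (sumR m (fun j => RInt Finv (1/2) (th j))
                                       - RInt Finv (1/2) (th i)) (RInt Finv (1/2) x))).
  { intros t. symmetry. apply (sumR_upd m (fun y => RInt Finv (1/2) y)), Hi. }
  rewrite <- (plus_zero_l (Finv (th i))).
  apply (@is_derive_plus R_AbsRing R_NormedModule).
  - apply (@is_derive_const R_AbsRing R_NormedModule).
  - apply (is_derive_RInt_open Finv 0 1); auto; lra.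
Qed.

Lemma D_Phi_sumR m th th' : in_open_box m th' ->
  D_Phi Finv m th th' = sumR m (fun i => bregman_1d Finv (th i) (th' i)).
Proof.
  intros Hth'. unfold D_Phi, Phi, inner, bregman_1d.
  rewrite !sumR_minus. f_equal. apply sumR_ext. intros i Hi.
  rewrite gradPhi_eq_Finv by auto. reflexivity.
Qed.

Lemma md_objective_sumR m g tht eps th : in_open_box m tht ->
  md_objective Finv m g tht eps th
  = sumR m (fun i => g i * (th i - tht i) + / eps * bregman_1d Finv (th i) (tht i)).
Proof.
  intros Htht. unfold md_objective, inner.
  rewrite D_Phi_sumR, sumR_plus, sumR_scal by exact Htht. reflexivity.
Qed.

Lemma md_objective_excess m g tht thnew eps th : eps <> 0 -> in_open_box m tht ->
  (forall i, (i < m)%nat -> Finv (thnew i) = Finv (tht i) - eps * g i) ->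
  md_objective Finv m g tht eps th
  = md_objective Finv m g tht eps thnew
    + / eps * sumR m (fun i => bregman_1d Finv (th i) (thnew i)).
Proof.
  intros Heps Htht Hstep. rewrite !md_objective_sumR by exact Htht.
  rewrite <- sumR_scal, <- sumR_plus. apply sumR_ext. intros i Hi.
  apply mirror_step_excess; auto.
Qed.

End MirrorMap.

Theorem proposition1 (F Finv : R -> R)
  (HFcont : forall x, continuous F x)
  (HFincr : forall x y, x < y -> F x < F y)
  (HFrange : forall x, 0 < F x < 1)
  (HFlimm : is_lim F m_infty 0)
  (HFlimp : is_lim F p_infty 1)
  (HFinv1 : forall u, 0 < u < 1 -> F (Finv u) = u)
  (HFinv2 : forall x, Finv (F x) = x)
  (m : nat) (eta g : nat -> R) (eps : R) (Heps : 0 < eps) :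
  let tht := fun i => F (eta i) in
  let thnew := fun i => F (eta i - eps * g i) in
  in_open_box m thnew /\
  (forall th, in_open_box m th ->
     md_objective Finv m g tht eps thnew <= md_objective Finv m g tht eps th) /\
  (forall th, in_open_box m th ->
     (forall th', in_open_box m th' ->
        md_objective Finv m g tht eps th <= md_objective Finv m g tht eps th') ->
     forall i, (i < m)%nat -> th i = thnew i).
Proof.
  intros tht thnew.
  pose proof (Finv_continuous F Finv HFcont HFincr HFrange HFinv1) as Hcont.
  pose proof (Finv_incr F Finv HFincr HFinv1) as Hincr.
  assert (Htht : in_open_box m tht) by (intros i _; apply HFrange).
  assert (Hnew : in_open_box m thnew) by (intros i _; apply HFrange).
  assert (Hexcess : forall th, md_objective Finv m g tht eps th
    = md_objective Finv m g tht eps thnew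
      + / eps * sumR m (fun i => bregman_1d Finv (th i) (thnew i))).
  { intros th. apply (md_objective_excess Finv Hcont); [lra | exact Htht |].
    intros i _. unfold thnew, tht. rewrite !HFinv2. reflexivity. }
  assert (Hdiv_ge0 : forall th, in_open_box m th -> forall i, (i < m)%nat ->
    0 <= bregman_1d Finv (th i) (thnew i)).
  { intros th Hth i Hi.
    apply (bregman_1d_ge0 Finv Hcont Hincr); [apply Hth, Hi | apply Hnew, Hi]. }
  assert (Hinv_eps : 0 < / eps) by (apply Rinv_0_lt_compat, Heps).
  split; [exact Hnew | split].
  - intros th Hth. rewrite (Hexcess th).
    pose proof (sumR_ge0 m _ (Hdiv_ge0 th Hth)). nra.
  - intros th Hth Hmin i Hi.
    specialize (Hmin thnew Hnew). rewrite (Hexcess th) in Hmin.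
    pose proof (sumR_ge_term m _ i (Hdiv_ge0 th Hth) Hi).
    destruct (Req_dec (th i) (thnew i)) as [|Hne]; [assumption | exfalso].
    assert (0 < bregman_1d Finv (th i) (thnew i)).
    { apply (bregman_1d_pos Finv Hcont Hincr); [apply Hth, Hi | apply Hnew, Hi | exact Hne]. }
    nra.
Qed.
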